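(* Let $x_1,\dots,x_n\in\mathbb{R}^p$, let $u_1,\dots,u_s$ be induced points chosen from $\{x_1,\dots,x_n\}$, let $\epsilon>0$ and $\eta_{1,n}>0$, and let $k_{\eta_{1,n}}(x,x')=\exp(-\|x-x'\|^2/(4\epsilon^2))\mathbf 1_{\{\|x-x'\|<\eta_{1,n}\}}$. Define the two-step graph Laplacian $L=I-(Z\Lambda^{-1}Z^\top)^{1/2}$ and the matrices $\tilde Z,\tilde\Lambda$ as in the context (assuming all normalizing sums are positive). Then $L=I-(\tilde Z\tilde\Lambda^{-1}\tilde Z^\top)^{1/2}$.
   Context: Notation $B_{i\cdot}=\sum_jB_{ij}$, $B_{\cdot j}=\sum_iB_{ij}$. For each $i$, $u_{\tau(i)}$ is the nearest induced point to $x_i$ (i.e. $\|u_{\tau(i)}-x_i\|=\min_j\|u_j-x_i\|$), and $n_j=\#\{i:\tau(i)=j\}$. Two-step objects ($1\le i\le n$, $1\le j\le s$): $A_{ij}=\dfrac{n_jk_{\eta_{1,n}}(x_i,u_j)}{\sum_{q=1}^nk_{\eta_{1,n}}(x_q,u_j)\sum_{q=1}^sn_qk_{\eta_{1,n}}(x_i,u_q)}$, $Z_{ij}=A_{ij}/A_{i\cdot}$, $\Lambda=\mathrm{diag}(Z_{\cdot1},\dots,Z_{\cdot s})$, and the square root is the PSD one. Approximated-point-cloud objects ($1\le i,j\le n$): $\tilde K_{ij}=k_{\eta_{1,n}}(x_i,u_{\tau(j)})$, $\tilde A_{ij}=\tilde K_{ij}/(\tilde K_{i\cdot}\tilde K_{\cdot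 j})$, $\tilde Z_{ij}=\tilde A_{ij}/\tilde A_{i\cdot}$, $\tilde\Lambda=\mathrm{diag}(\tilde Z_{\cdot1},\dots,\tilde Z_{\cdot n})$. *)

From HB Require Import structures.
From mathcomp Require Import all_boot all_order all_algebra.
From mathcomp Require Import all_classical all_reals all_analysis.
From Stdlib Require Import ClassicalEpsilon.
Set Implicit Arguments. Unset Strict Implicit. Unset Printing Implicit Defensive.
Import Order.TTheory GRing.Theory Num.Theory.
Local Open Scope ring_scope.

Section Defs.
Context {R : realType}.

Definition sqdist (p : nat) (x y : 'rV[R]_p) : R := \sum_(k < p) (x 0 k - y 0 k) ^+ 2.
Definition dist (p : nat) (x y : 'rV[R]_p) : R := Num.sqrt (sqdist x y).

Definition kern (p : nat) (eps eta : R) (x y : 'rV[R]_p) : R :=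
  expR (- (dist x y) ^+ 2 / (4 * eps ^+ 2)) * (if dist x y < eta then 1 else 0).

Definition rowsum (m k : nat) (B : 'M[R]_(m, k)) (i : 'I_m) : R := \sum_(j < k) B i j.
Definition colsum (m k : nat) (B : 'M[R]_(m, k)) (j : 'I_k) : R := \sum_(i < m) B i j.

Definition cnt (n s : nat) (tau : 'I_n -> 'I_s) (j : 'I_s) : R :=
  #|[set i | tau i == j]|%:R.

Definition Amat (p n s : nat) (eps eta : R) (x : 'I_n -> 'rV[R]_p)
  (u : 'I_s -> 'rV[R]_p) (tau : 'I_n -> 'I_s) : 'M[R]_(n, s) :=
  \matrix_(i < n, j < s)
    (cnt tau j * kern eps eta (x i) (u j) /
      ((\sum_(q < n) kern eps eta (x q) (u j)) *
       (\sum_(q < s) cnt tau q * kern eps eta (x i) (u q)))).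

Definition Zmat (m k : nat) (B : 'M[R]_(m, k)) : 'M[R]_(m, k) :=
  \matrix_(i < m, j < k) (B i j / rowsum B i).

Definition Lam (m k : nat) (Z : 'M[R]_(m, k)) : 'M[R]_k :=
  diag_mx (\row_(j < k) colsum Z j).

Definition Ktil (p n s : nat) (eps eta : R) (x : 'I_n -> 'rV[R]_p)
  (u : 'I_s -> 'rV[R]_p) (tau : 'I_n -> 'I_s) : 'M[R]_n :=
  \matrix_(i < n, j < n) kern eps eta (x i) (u (tau j)).

Definition Atil_of (m : nat) (K : 'M[R]_m) : 'M[R]_m :=
  \matrix_(i < m, j < m) (K i j / (rowsum K i * colsum K j)).

Definition psd (m : nat) (B : 'M[R]_m) : Prop :=
  B^T = B /\ forall v : 'cV[R]_m, 0 <= (v^T *m B *m v) 0 0.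

(* the PSD square root: a chosen PSD B with B B = M (unique when M is PSD) *)
Definition sqrtm (m : nat) (M : 'M[R]_m) : 'M[R]_m :=
  epsilon (inhabits 0) (fun B => psd B /\ B *m B = M).

End Defs.

From HB Require Import structures.
From mathcomp Require Import all_boot all_order all_algebra.
From mathcomp Require Import all_classical all_reals all_analysis.
From mathcomp Require Import ring.
Set Implicit Arguments. Unset Strict Implicit. Unset Printing Implicit Defensive.
Import Order.TTheory GRing.Theory Num.Theory.
Local Open Scope ring_scope.

(* The approximated point cloud repeats u_q exactly n_q times, so the matrix
   A~ is A with column q spread evenly (weight 1/n_q) over the n_q columns j
   with tau j = q.  Row sums, hence the normalisation Z, commute with this
   spreading, and in Z Lambda^-1 Z^T the n_q copies of column q contribute
   n_q * (1/n_q)^2 / (1/n_q) = 1 times the original term.  So both Laplacians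
   take the square root of the same matrix. *)

Section Spread.
Variables (R : realType) (m n s : nat) (tau : 'I_n -> 'I_s).

Lemma sum_comp_cnt (F : 'I_s -> R) :
  \sum_(j < n) F (tau j) = \sum_(q < s) cnt tau q * F q.
Proof.
rewrite (partition_big tau predT) //=; apply: eq_bigr => q _.
rewrite (eq_bigr (fun _ => F q)); last by move=> j /eqP ->.
by rewrite sumr_const /cnt cardsE mulr_natl.
Qed.

Lemma cnt_comp_neq0 (j : 'I_n) : cnt tau (tau j) != 0 :> R.
Proof.
rewrite /cnt pnatr_eq0 -lt0n; apply/card_gt0P; exists j; by rewrite inE.
Qed.

Definition spread (B : 'M[R]_(m, s)) : 'M[R]_(m, n) :=
  \matrix_(i, j) (B i (tau j) / cnt tau (tau j)).

Definition supported_on_image (B : 'M[R]_(m, s)) : Prop :=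
  forall i q, cnt tau q = 0 :> R -> B i q = 0.

Lemma rowsum_spread (B : 'M[R]_(m, s)) :
  supported_on_image B -> rowsum (spread B) =1 rowsum B.
Proof.
move=> suppB i; rewrite /rowsum.
pose G q := B i q / cnt tau q.
rewrite (eq_bigr (fun j => G (tau j))); last by move=> j _; rewrite mxE.
rewrite sum_comp_cnt; apply: eq_bigr => q _.
have [cq0|cq] := eqVneq (cnt tau q : R) 0; first by rewrite cq0 /G suppB // mul0r.
by rewrite /G mulrCA divff // mulr1.
Qed.

Lemma colsum_spread (B : 'M[R]_(m, s)) (j : 'I_n) :
  colsum (spread B) j = colsum B (tau j) / cnt tau (tau j).
Proof. by rewrite /colsum mulr_suml; apply: eq_bigr => i _; rewrite mxE. Qed.

Lemma Zmat_spread (B : 'M[R]_(m, s)) :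
  supported_on_image B -> Zmat (spread B) = spread (Zmat B).
Proof.
move=> suppB; apply/matrixP => i j.
by rewrite !mxE rowsum_spread // mulrAC.
Qed.

Lemma Zmat_supported_on_image (B : 'M[R]_(m, s)) :
  supported_on_image B -> supported_on_image (Zmat B).
Proof. by move=> suppB i q cq0; rewrite mxE suppB // mul0r. Qed.

Lemma invmx_Lam (k : nat) (Y : 'M[R]_(m, k)) :
  (forall j, colsum Y j != 0) ->
  invmx (Lam Y) = diag_mx (\row_j (colsum Y j)^-1).
Proof.
move=> Y0; set E := diag_mx _.
have LE : Lam Y *m E = 1%:M.
  rewrite /Lam /E mulmx_diag; apply/matrixP => i j.
  by rewrite !mxE; case: eqP => [->|_]; rewrite ?mulr1n ?mulr0n ?mxE ?divff.
have [LY _] := mulmx1_unit LE.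
by rewrite -[invmx _]mulmx1 -LE mulmxA mulVmx // mul1mx.
Qed.

Lemma mulmx_invLam_trE (k : nat) (Y : 'M[R]_(m, k)) :
  (forall j, colsum Y j != 0) ->
  Y *m invmx (Lam Y) *m Y^T = \matrix_(a, b) \sum_j (Y a j * Y b j / colsum Y j).
Proof.
move=> Y0; rewrite invmx_Lam //; apply/matrixP => a b.
rewrite mul_mx_diag !mxE; apply: eq_bigr => j _.
by rewrite !mxE mulrAC.
Qed.

Lemma mulmx_invLam_tr_spread (Y : 'M[R]_(m, s)) :
  supported_on_image Y -> (forall q, colsum Y q != 0) ->
  spread Y *m invmx (Lam (spread Y)) *m (spread Y)^T =
  Y *m invmx (Lam Y) *m Y^T.
Proof.
move=> suppY Y0.
have spreadY0 j : colsum (spread Y) j != 0.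
  by rewrite colsum_spread mulf_neq0 ?invr_eq0 ?Y0 ?cnt_comp_neq0.
rewrite !mulmx_invLam_trE //; apply/matrixP => a b; rewrite !mxE.
pose G q := Y a q / cnt tau q * (Y b q / cnt tau q) / (colsum Y q / cnt tau q).
rewrite (eq_bigr (fun j => G (tau j))); last first.
  by move=> j _; rewrite !mxE colsum_spread.
rewrite sum_comp_cnt; apply: eq_bigr => q _; rewrite /G.
have [cq0|cq] := eqVneq (cnt tau q : R) 0; first by rewrite cq0 !suppY // !mul0r.
by field; rewrite cq Y0.
Qed.

End Spread.

Lemma Atil_of_Ktil (R : realType) (p n s : nat) (eps eta : R)
  (x : 'I_n -> 'rV[R]_p) (u : 'I_s -> 'rV[R]_p) (tau : 'I_n -> 'I_s) :
  Atil_of (Ktil eps eta x u tau) = spread tau (Amat eps eta x u tau).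
Proof.
apply/matrixP => i j; rewrite !mxE.
have -> : rowsum (Ktil eps eta x u tau) i =
          \sum_(q < s) cnt tau q * kern eps eta (x i) (u q).
  by rewrite -sum_comp_cnt; apply: eq_bigr => l _; rewrite mxE.
have -> : colsum (Ktil eps eta x u tau) j =
          \sum_(q < n) kern eps eta (x q) (u (tau j)).
  by apply: eq_bigr => l _; rewrite mxE.
rewrite [cnt _ _ * _]mulrC [RHS]mulrAC mulfK ?cnt_comp_neq0 //.
by rewrite [_ * \sum_(q < s) _]mulrC.
Qed.

Lemma Amat_supported_on_image (R : realType) (p n s : nat) (eps eta : R)
  (x : 'I_n -> 'rV[R]_p) (u : 'I_s -> 'rV[R]_p) (tau : 'I_n -> 'I_s) :
  supported_on_image tau (Amat eps eta x u tau).
Proof. by move=> i q cq0; rewrite mxE cq0 !mul0r. Qed.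

Theorem lemma1 (R : realType) (p n s : nat) (eps eta : R)
  (x : 'I_n -> 'rV[R]_p) (u : 'I_s -> 'rV[R]_p) (sigma : 'I_s -> 'I_n)
  (tau : 'I_n -> 'I_s) :
  0 < eps -> 0 < eta ->
  injective sigma -> (forall j, u j = x (sigma j)) ->
  (forall i j, dist (u (tau i)) (x i) <= dist (u j) (x i)) ->
  (* all normalizing sums are positive *)
  (forall j, 0 < \sum_(q < n) kern eps eta (x q) (u j)) ->
  (forall i, 0 < \sum_(q < s) cnt tau q * kern eps eta (x i) (u q)) ->
  (forall i, 0 < rowsum (Amat eps eta x u tau) i) ->
  (forall j, 0 < colsum (Zmat (Amat eps eta x u tau)) j) ->
  (forall i, 0 < rowsum (Ktil eps eta x u tau) i) ->
  (forall j, 0 < colsum (Ktil eps eta x u tau) j) ->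
  (forall i, 0 < rowsum (Atil_of (Ktil eps eta x u tau)) i) ->
  (forall j, 0 < colsum (Zmat (Atil_of (Ktil eps eta x u tau))) j) ->
  let Z := Zmat (Amat eps eta x u tau) in
  let Zt := Zmat (Atil_of (Ktil eps eta x u tau)) in
  let L := 1%:M - sqrtm (Z *m invmx (Lam Z) *m Z^T) in
  L = 1%:M - sqrtm (Zt *m invmx (Lam Zt) *m Zt^T).
Proof.
move=> _ _ _ _ _ _ _ _ Z_col_gt0 _ _ _ _ Z Zt L.
have suppA : supported_on_image tau (Amat eps eta x u tau).
  exact: Amat_supported_on_image.
have Zt_spread : Zt = spread tau Z by rewrite /Zt Atil_of_Ktil Zmat_spread.
rewrite /L Zt_spread mulmx_invLam_tr_spread.
- by [].
- exact: Zmat_supported_on_image.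
- by move=> q; rewrite gt_eqF.
Qed.
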